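(* Let $V(r)=r^{-6}-2r^{-3}$. There exists $A_3>0$ such that for every $A>A_3$, every minimizer $y_A\ge1$ of $y\mapsto E_V(0,y,A)$ on $[1,\infty)$ satisfies $$X_1(A)^{1/3}\le y_A\le X_2(A)^{1/3},$$ where $$X_{1,2}(A)=\frac{2\zeta_{\mathbb Z^2}(6)A^3\mp\sqrt{4\zeta_{\mathbb Z^2}(6)^2A^6-32A^4+8\zeta_{\mathbb Z^2}(12)A^2}}{4}.$$ In particular, $\lim_{A\to\infty}y_A=+\infty$, and there exists $C>0$ such that $y_A\le CA$ for all $A>A_3$.
   Context: For $A>0$, $x\in\mathbb R$, $y>0$, $E_{f}(x,y,A)=\sum_{m,n} f\left(A\left[\frac1y(m+xn)^2+yn^2\right]\right)$, where $\sum_{m,n}$ denotes summation over all $(m,n)\in\mathbb Z^2\setminus\{(0,0)\}$; $E_V(0,y,A)$, $y\ge1$, is the energy of the rectangular lattice $\mathbb Z(\sqrt{A/y},0)\oplus\mathbb Z(0,\sqrt{Ay})$. $\zeta_{\mathbb Z^2}(s)=\sum_{m,n}(m^2+n^2)^{-s/2}$. *)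

From Stdlib Require Import Reals Lra ZArith ClassicalEpsilon.
Open Scope R_scope.

Definition sq_partial (g : Z -> Z -> R) (N : nat) : R :=
  sum_f_R0 (fun i =>
    sum_f_R0 (fun j =>
      let m := (Z.of_nat i - Z.of_nat N)%Z in
      let n := (Z.of_nat j - Z.of_nat N)%Z in
      if andb (Z.eqb m 0) (Z.eqb n 0) then 0 else g m n) (2 * N)) (2 * N).

(* The lattice sum  sum_{(m,n) in Z^2 \ {0}} g m n, defined as the limit of
   the square partial sums (all sums used here are absolutely convergent,
   so this is the usual value). *)
Definition lattice_sum (g : Z -> Z -> R) : R :=
  epsilon (inhabits 0) (fun l => Un_cv (sq_partial g) l).

Definition E_f (f : R -> R) (x y A : R) : R :=
  lattice_sum (fun m n =>
    f (A * ( / y * (IZR m + x * IZR n) ^ 2 + y * (IZR n) ^ 2))).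

Definition V (r : R) : R := / r ^ 6 - 2 * / r ^ 3.

(* zeta_{Z^2}(s) for s = 2k even: sum (m^2+n^2)^{-k} *)
Definition zeta_Z2_even (k : nat) : R :=
  lattice_sum (fun m n => / (IZR m ^ 2 + IZR n ^ 2) ^ k).

Definition zeta6 : R := zeta_Z2_even 3.
Definition zeta12 : R := zeta_Z2_even 6.

Definition X1 (A : R) : R :=
  (2 * zeta6 * A ^ 3
   - sqrt (4 * zeta6 ^ 2 * A ^ 6 - 32 * A ^ 4 + 8 * zeta12 * A ^ 2)) / 4.
Definition X2 (A : R) : R :=
  (2 * zeta6 * A ^ 3
   + sqrt (4 * zeta6 ^ 2 * A ^ 6 - 32 * A ^ 4 + 8 * zeta12 * A ^ 2)) / 4.

Definition is_minimizer (A y : R) : Prop :=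
  1 <= y /\ forall y', 1 <= y' -> E_f V 0 y A <= E_f V 0 y' A.

(* Write E_V(0,y,A) = A^-6 P_6(y) - 2 A^-3 P_3(y) with P_k(y) = sum (m^2/y + y n^2)^-k.
   For y >= 1 the two terms (m,n) = (±1,0) give P_k(y) >= 2 y^k, and
   m^2/y + y n^2 >= (m^2+n^2)/y gives P_k(y) <= zeta(2k) y^k.  Comparing a minimizer y
   with the competitor A^(1/3) then yields, for X = y^3, the quadratic inequality
   2X^2 - 2 zeta(6) A^3 X + 4A^4 - zeta(12) A^2 <= 0, so X lies between its roots
   X_1(A) and X_2(A); the same inequality bounds X below by roughly 2A/zeta(6) and above
   by (zeta(6) + zeta(12)/2) A^3.  All lattice sums converge: their square partial sums
   are monotone and dominated by those of 3/((1+m^2)(1+n^2)). *)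

From Stdlib Require Import Reals Lra Lia Psatz ZArith Bool.
From Stdlib Require Import ClassicalEpsilon FunctionalExtensionality.
Open Scope R_scope.

Definition sq_term (g : Z -> Z -> R) (N i j : nat) : R :=
  if andb (Z.eqb (Z.of_nat i - Z.of_nat N) 0) (Z.eqb (Z.of_nat j - Z.of_nat N) 0)
  then 0 else g (Z.of_nat i - Z.of_nat N)%Z (Z.of_nat j - Z.of_nat N)%Z.

Lemma sq_partial_terms g N :
  sq_partial g N = sum_f_R0 (fun i => sum_f_R0 (sq_term g N i) (2 * N)) (2 * N).
Proof. reflexivity. Qed.

Lemma sq_term_shift g N i j : sq_term g (S N) (S i) (S j) = sq_term g N i j.
Proof.
  unfold sq_term.
  replace (Z.of_nat (S i) - Z.of_nat (S N))%Z with (Z.of_nat i - Z.of_nat N)%Z by lia.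
  replace (Z.of_nat (S j) - Z.of_nat (S N))%Z with (Z.of_nat j - Z.of_nat N)%Z by lia.
  reflexivity.
Qed.

Lemma sq_term_ind (P : R -> Prop) g N i j : P 0 ->
  (forall m n, (m <> 0 \/ n <> 0)%Z -> P (g m n)) -> P (sq_term g N i j).
Proof.
  intros H0 Hg. unfold sq_term. destruct (andb _ _) eqn:E; [exact H0|].
  apply Hg. apply andb_false_iff in E.
  destruct E as [E|E]; [left|right]; apply Z.eqb_neq, E.
Qed.

Definition nonneg_off_origin (g : Z -> Z -> R) : Prop :=
  forall m n, (m <> 0 \/ n <> 0)%Z -> 0 <= g m n.

Definition lattice_summable (g : Z -> Z -> R) : Prop :=
  Un_cv (sq_partial g) (lattice_sum g).

Lemma sq_partial_le g h N :
  (forall m n, (m <> 0 \/ n <> 0)%Z -> g m n <= h m n) ->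
  sq_partial g N <= sq_partial h N.
Proof.
  intros Hgh. rewrite !sq_partial_terms.
  apply sum_Rle; intros i _; apply sum_Rle; intros j _.
  unfold sq_term. destruct (andb _ _) eqn:E; [lra|].
  apply Hgh. apply andb_false_iff in E.
  destruct E as [E|E]; [left|right]; apply Z.eqb_neq, E.
Qed.

Lemma sum_f_R0_lin (u v : nat -> R) a b n :
  sum_f_R0 (fun j => a * u j + b * v j) n = a * sum_f_R0 u n + b * sum_f_R0 v n.
Proof. induction n as [|n IH]; simpl; [|rewrite IH]; ring. Qed.

Lemma sq_partial_lin a b g h N :
  sq_partial (fun m n => a * g m n + b * h m n) N =
  a * sq_partial g N + b * sq_partial h N.
Proof.
  rewrite !sq_partial_terms, <- sum_f_R0_lin.
  apply sum_eq; intros i _. rewrite <- sum_f_R0_lin.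
  apply sum_eq; intros j _. unfold sq_term. destruct (andb _ _); ring.
Qed.

Lemma sq_partial_scal c g N :
  sq_partial (fun m n => c * g m n) N = c * sq_partial g N.
Proof.
  transitivity (sq_partial (fun m n => c * g m n + 0 * g m n) N).
  - f_equal. do 2 (apply functional_extensionality; intro). ring.
  - rewrite sq_partial_lin. ring.
Qed.

Lemma sum_f_R0_peel (f : nat -> R) k :
  sum_f_R0 f (S (S k)) = f 0%nat + sum_f_R0 (fun i => f (S i)) k + f (S (S k)).
Proof. rewrite tech5, decomp_sum by lia. simpl pred. ring. Qed.

(* The square of side 2N+3 is that of side 2N+1 plus its border, whose terms are nonnegative. *)
Lemma sq_partial_incr g N :
  nonneg_off_origin g -> sq_partial g N <= sq_partial g (S N).
Proof.
  intros Hg. rewrite !sq_partial_terms.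
  replace (2 * S N)%nat with (S (S (2 * N))) by lia.
  assert (Hterm : forall i j, 0 <= sq_term g (S N) i j).
  { intros; apply sq_term_ind; [lra | exact Hg]. }
  assert (Hrow : forall i, 0 <= sum_f_R0 (sq_term g (S N) i) (S (S (2 * N)))).
  { intros; apply cond_pos_sum; auto. }
  rewrite sum_f_R0_peel.
  enough (sum_f_R0 (fun i => sum_f_R0 (sq_term g N i) (2 * N)) (2 * N) <=
          sum_f_R0 (fun i => sum_f_R0 (sq_term g (S N) (S i)) (S (S (2 * N)))) (2 * N))
    by (generalize (Hrow 0%nat) (Hrow (S (S (2 * N)))); lra).
  apply sum_Rle; intros i _. rewrite sum_f_R0_peel.
  assert (Hinner : sum_f_R0 (fun j => sq_term g (S N) (S i) (S j)) (2 * N) =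
                   sum_f_R0 (sq_term g N i) (2 * N))
    by (apply sum_eq; intros; apply sq_term_shift).
  generalize (Hterm (S i) 0%nat) (Hterm (S i) (S (S (2 * N)))); lra.
Qed.

Lemma lattice_sum_spec g l : Un_cv (sq_partial g) l -> lattice_sum g = l.
Proof.
  intros Hl. apply (UL_sequence (sq_partial g)); [|exact Hl].
  unfold lattice_sum. apply epsilon_spec. exists l; exact Hl.
Qed.

Lemma lattice_summable_bounded g B :
  nonneg_off_origin g -> (forall N, sq_partial g N <= B) -> lattice_summable g.
Proof.
  intros Hg HB. destruct (growing_cv (sq_partial g)) as [l Hl].
  - intro N; apply sq_partial_incr, Hg.
  - exists B. intros x [N ->]. apply HB.
  - unfold lattice_summable. rewrite (lattice_sum_spec g l Hl). exact Hl.
Qed.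

Lemma sq_partial_le_lattice_sum g N :
  nonneg_off_origin g -> lattice_summable g -> sq_partial g N <= lattice_sum g.
Proof.
  intros Hg Hs. apply growing_ineq; [intro; apply sq_partial_incr, Hg | exact Hs].
Qed.

Lemma lattice_summable_le g h :
  nonneg_off_origin g -> nonneg_off_origin h -> lattice_summable h ->
  (forall m n, (m <> 0 \/ n <> 0)%Z -> g m n <= h m n) ->
  lattice_summable g /\ lattice_sum g <= lattice_sum h.
Proof.
  intros Hg Hh Hs Hgh.
  assert (Hgs : lattice_summable g).
  { apply (lattice_summable_bounded g (lattice_sum h) Hg). intros N.
    apply Rle_trans with (sq_partial h N);
      [apply sq_partial_le, Hgh | apply sq_partial_le_lattice_sum; assumption]. }
  split; [exact Hgs|].
  exact (Rle_cv_lim (fun N => sq_partial_le g h N Hgh) Hgs Hs).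
Qed.

Lemma Un_cv_scal c u l : Un_cv u l -> Un_cv (fun N => c * u N) (c * l).
Proof.
  intros Hu. apply CV_mult; [|exact Hu].
  intros e He. exists 0%nat. intros. unfold R_dist. rewrite Rminus_diag, Rabs_R0. lra.
Qed.

Lemma lattice_summable_scal c g :
  lattice_summable g ->
  lattice_summable (fun m n => c * g m n) /\
  lattice_sum (fun m n => c * g m n) = c * lattice_sum g.
Proof.
  intros Hg.
  assert (Hcv : Un_cv (sq_partial (fun m n => c * g m n)) (c * lattice_sum g)).
  { replace (sq_partial (fun m n => c * g m n)) with (fun N => c * sq_partial g N)
      by (apply functional_extensionality; intro N; symmetry; apply sq_partial_scal).
    apply Un_cv_scal, Hg. }
  unfold lattice_summable. rewrite (lattice_sum_spec _ _ Hcv). auto.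
Qed.

Lemma lattice_sum_lin a b g h :
  lattice_summable g -> lattice_summable h ->
  lattice_sum (fun m n => a * g m n + b * h m n) = a * lattice_sum g + b * lattice_sum h.
Proof.
  intros Hg Hh. apply lattice_sum_spec.
  replace (sq_partial (fun m n => a * g m n + b * h m n))
    with (fun N => a * sq_partial g N + b * sq_partial h N)
    by (apply functional_extensionality; intro N; symmetry; apply sq_partial_lin).
  apply CV_plus; apply Un_cv_scal; assumption.
Qed.

Lemma axis_le_lattice_sum g :
  nonneg_off_origin g -> lattice_summable g -> g (-1)%Z 0%Z + g 1%Z 0%Z <= lattice_sum g.
Proof.
  intros Hg Hs. apply Rle_trans with (sq_partial g 1);
    [|apply sq_partial_le_lattice_sum; assumption].
  assert (H1 : sq_partial g 1 =
    g (-1)%Z (-1)%Z + g (-1)%Z 0%Z + g (-1)%Z 1%Z + g 0%Z (-1)%Z + g 0%Z 1%Z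
    + g 1%Z (-1)%Z + g 1%Z 0%Z + g 1%Z 1%Z)
    by (rewrite sq_partial_terms; simpl; unfold sq_term; simpl; ring).
  rewrite H1.
  assert (0 <= g (-1)%Z (-1)%Z) by (apply Hg; lia).
  assert (0 <= g (-1)%Z 1%Z) by (apply Hg; lia).
  assert (0 <= g 0%Z (-1)%Z) by (apply Hg; lia).
  assert (0 <= g 0%Z 1%Z) by (apply Hg; lia).
  assert (0 <= g 1%Z (-1)%Z) by (apply Hg; lia).
  assert (0 <= g 1%Z 1%Z) by (apply Hg; lia).
  lra.
Qed.

Definition inv_norm_pow (k : nat) (m n : Z) : R := / (IZR m ^ 2 + IZR n ^ 2) ^ k.

Definition inv_one_plus_sq (m : Z) : R := / (1 + IZR m ^ 2).

Lemma norm_sq_ge_1 m n : (m <> 0 \/ n <> 0)%Z -> 1 <= IZR m ^ 2 + IZR n ^ 2.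
Proof.
  intros Hmn. replace (IZR m ^ 2 + IZR n ^ 2) with (IZR (m * m + n * n))
    by (rewrite plus_IZR, !mult_IZR; ring).
  apply IZR_le. destruct Hmn; nia.
Qed.

Lemma inv_one_plus_sq_pos m : 0 < inv_one_plus_sq m.
Proof. apply Rinv_0_lt_compat. nra. Qed.

(* Telescoping against 4/(n+1) - 4/(n+2), which dominates the two new terms 2/(1+(n+1)^2). *)
Lemma sum_inv_one_plus_sq_le N :
  sum_f_R0 (fun i => inv_one_plus_sq (Z.of_nat i - Z.of_nat N)) (2 * N) <= 5 - 4 / (INR N + 1).
Proof.
  induction N as [|N IH].
  - simpl. unfold inv_one_plus_sq. simpl. lra.
  - replace (2 * S N)%nat with (S (S (2 * N))) by lia. rewrite sum_f_R0_peel.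
    assert (Hmid : sum_f_R0 (fun i => inv_one_plus_sq (Z.of_nat (S i) - Z.of_nat (S N))) (2 * N)
                   = sum_f_R0 (fun i => inv_one_plus_sq (Z.of_nat i - Z.of_nat N)) (2 * N)).
    { apply sum_eq; intros i _. f_equal. lia. }
    assert (Hends : forall z, (z = - Z.of_nat (S N) \/ z = Z.of_nat (S N))%Z ->
                    inv_one_plus_sq z = / (1 + (INR N + 1) ^ 2)).
    { intros z Hz. unfold inv_one_plus_sq. rewrite <- S_INR, INR_IZR_INZ.
      destruct Hz as [-> | ->]; [rewrite opp_IZR|]; do 2 f_equal; ring. }
    rewrite Hmid, !Hends, S_INR by lia.
    assert (HN := pos_INR N). set (n := INR N) in *.
    assert (2 * / (1 + (n + 1) ^ 2) <= 4 / (n + 1) - 4 / (n + 1 + 1)).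
    { replace (4 / (n + 1) - 4 / (n + 1 + 1)) with (4 / ((n + 1) * (n + 2))) by (field; lra).
      replace (2 * / (1 + (n + 1) ^ 2)) with (4 / (2 * (1 + (n + 1) ^ 2))) by (field; nra).
      apply Rmult_le_compat_l; [lra|]. apply Rinv_le_contravar; nra. }
    lra.
Qed.

Lemma sq_partial_product_le u N : (forall m, 0 <= u m) ->
  sq_partial (fun m n => u m * u n) N <=
  (sum_f_R0 (fun i => u (Z.of_nat i - Z.of_nat N)%Z) (2 * N)) ^ 2.
Proof.
  intros Hu. set (s := sum_f_R0 (fun i => u (Z.of_nat i - Z.of_nat N)%Z) (2 * N)).
  replace (s ^ 2) with
    (sum_f_R0 (fun i => sum_f_R0 (fun j => u (Z.of_nat i - Z.of_nat N)%Z *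
                                          u (Z.of_nat j - Z.of_nat N)%Z) (2 * N)) (2 * N)).
  2:{ replace (s ^ 2) with (s * s) by ring. unfold s. rewrite scal_sum. apply sum_eq; intros i _.
      rewrite scal_sum. apply sum_eq; intros. ring. }
  rewrite sq_partial_terms. apply sum_Rle; intros i _; apply sum_Rle; intros j _.
  unfold sq_term. destruct (andb _ _); [|lra].
  generalize (Hu (Z.of_nat i - Z.of_nat N)%Z) (Hu (Z.of_nat j - Z.of_nat N)%Z). nra.
Qed.

(* With s = m^2 + n^2 >= 1: (1+m^2)(1+n^2) = 1 + s + m^2 n^2 <= 3 s^3. *)
Lemma inv_norm_pow3_le_product m n : (m <> 0 \/ n <> 0)%Z ->
  inv_norm_pow 3 m n <= 3 * (inv_one_plus_sq m * inv_one_plus_sq n).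
Proof.
  intros Hmn. assert (Hs := norm_sq_ge_1 m n Hmn). unfold inv_norm_pow, inv_one_plus_sq.
  assert (0 <= IZR m ^ 2) by nra. assert (0 <= IZR n ^ 2) by nra.
  set (u := IZR m ^ 2) in *. set (v := IZR n ^ 2) in *.
  replace (3 * (/ (1 + u) * / (1 + v))) with (/ ((1 + u) * (1 + v) / 3)) by (field; lra).
  apply Rinv_le_contravar; [nra|].
  set (s := u + v) in *.
  assert (u * v <= s * s) by (unfold s; nra).
  assert (s <= s ^ 2) by nra. assert (s ^ 2 <= s ^ 3) by nra.
  replace ((1 + u) * (1 + v)) with (1 + s + u * v) by (unfold s; ring). nra.
Qed.

Lemma sq_partial_inv_norm_pow3_le N : sq_partial (inv_norm_pow 3) N <= 75.
Proof.
  apply Rle_trans with (sq_partial (fun m n => 3 * (inv_one_plus_sq m * inv_one_plus_sq n)) N).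
  { apply sq_partial_le, inv_norm_pow3_le_product. }
  rewrite sq_partial_scal.
  assert (Hprod := sq_partial_product_le inv_one_plus_sq N
                     (fun m => Rlt_le _ _ (inv_one_plus_sq_pos m))).
  assert (Hsum := sum_inv_one_plus_sq_le N).
  assert (Hsum0 : 0 <= sum_f_R0 (fun i => inv_one_plus_sq (Z.of_nat i - Z.of_nat N)) (2 * N))
    by (apply cond_pos_sum; intros; apply Rlt_le, inv_one_plus_sq_pos).
  assert (0 < 4 / (INR N + 1)) by (generalize (pos_INR N); intros; apply Rdiv_lt_0_compat; lra).
  nra.
Qed.

Lemma inv_norm_pow_nonneg k : nonneg_off_origin (inv_norm_pow k).
Proof.
  intros m n Hmn. apply Rlt_le, Rinv_0_lt_compat, pow_lt.
  generalize (norm_sq_ge_1 m n Hmn); lra.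
Qed.

Lemma inv_norm_pow_antitone k m n : (3 <= k)%nat -> (m <> 0 \/ n <> 0)%Z ->
  inv_norm_pow k m n <= inv_norm_pow 3 m n.
Proof.
  intros Hk Hmn. assert (Hs := norm_sq_ge_1 m n Hmn). unfold inv_norm_pow.
  apply Rinv_le_contravar; [apply pow_lt; lra | apply Rle_pow; assumption].
Qed.

Lemma inv_norm_pow_summable k : (3 <= k)%nat -> lattice_summable (inv_norm_pow k).
Proof.
  intros Hk.
  assert (H3 : lattice_summable (inv_norm_pow 3))
    by exact (lattice_summable_bounded _ 75 (inv_norm_pow_nonneg 3) sq_partial_inv_norm_pow3_le).
  apply (lattice_summable_le _ _ (inv_norm_pow_nonneg k) (inv_norm_pow_nonneg 3) H3).
  intros; apply inv_norm_pow_antitone; assumption.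
Qed.

Lemma zeta_Z2_even_ge_2 k : (3 <= k)%nat -> 2 <= zeta_Z2_even k.
Proof.
  intros Hk.
  assert (Haxis := axis_le_lattice_sum _ (inv_norm_pow_nonneg k) (inv_norm_pow_summable k Hk)).
  unfold inv_norm_pow in Haxis at 1 2. simpl IZR in Haxis.
  replace ((-1) ^ 2 + 0 ^ 2) with 1 in Haxis by ring.
  replace (1 ^ 2 + 0 ^ 2) with 1 in Haxis by ring.
  rewrite pow1, Rinv_1 in Haxis. exact Haxis.
Qed.

Definition rect_form (y : R) (m n : Z) : R := / y * (IZR m + 0 * IZR n) ^ 2 + y * IZR n ^ 2.

Definition rect_inv_pow (k : nat) (y : R) (m n : Z) : R := / rect_form y m n ^ k.

Lemma rect_form_ge y m n : 1 <= y -> (IZR m ^ 2 + IZR n ^ 2) / y <= rect_form y m n.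
Proof.
  intros Hy. unfold rect_form. replace (IZR m + 0 * IZR n) with (IZR m) by ring.
  replace (/ y * IZR m ^ 2 + y * IZR n ^ 2) with ((IZR m ^ 2 + y * y * IZR n ^ 2) / y)
    by (field; lra).
  apply Rmult_le_compat_r; [apply Rlt_le, Rinv_0_lt_compat; lra|].
  assert (0 <= IZR n ^ 2) by nra. assert (1 <= y * y) by nra. nra.
Qed.

Lemma rect_form_pos y m n : 1 <= y -> (m <> 0 \/ n <> 0)%Z -> 0 < rect_form y m n.
Proof.
  intros Hy Hmn. eapply Rlt_le_trans; [|apply rect_form_ge, Hy].
  apply Rdiv_lt_0_compat; [generalize (norm_sq_ge_1 m n Hmn) |]; lra.
Qed.

Lemma rect_inv_pow_nonneg k y : 1 <= y -> nonneg_off_origin (rect_inv_pow k y).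
Proof.
  intros Hy m n Hmn. apply Rlt_le, Rinv_0_lt_compat, pow_lt, rect_form_pos; assumption.
Qed.

Lemma rect_inv_pow_le k y m n : 1 <= y -> (m <> 0 \/ n <> 0)%Z ->
  rect_inv_pow k y m n <= y ^ k * inv_norm_pow k m n.
Proof.
  intros Hy Hmn. assert (Hs := norm_sq_ge_1 m n Hmn).
  unfold rect_inv_pow, inv_norm_pow.
  replace (y ^ k * / (IZR m ^ 2 + IZR n ^ 2) ^ k) with (/ ((IZR m ^ 2 + IZR n ^ 2) / y) ^ k)
    by (unfold Rdiv; rewrite Rpow_mult_distr, pow_inv, Rinv_mult, Rinv_inv; ring).
  apply Rinv_le_contravar; [apply pow_lt, Rdiv_lt_0_compat; lra|].
  apply pow_incr. split; [apply Rlt_le, Rdiv_lt_0_compat; lra | apply rect_form_ge, Hy].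
Qed.

Lemma rect_inv_pow_summable_le k y : (3 <= k)%nat -> 1 <= y ->
  lattice_summable (rect_inv_pow k y) /\
  lattice_sum (rect_inv_pow k y) <= y ^ k * zeta_Z2_even k.
Proof.
  intros Hk Hy.
  destruct (lattice_summable_scal (y ^ k) _ (inv_norm_pow_summable k Hk)) as [Hs Hv].
  assert (Hnn : nonneg_off_origin (fun m n => y ^ k * inv_norm_pow k m n)).
  { intros m n Hmn. apply Rmult_le_pos; [apply pow_le; lra | apply inv_norm_pow_nonneg, Hmn]. }
  destruct (lattice_summable_le _ _ (rect_inv_pow_nonneg k y Hy) Hnn Hs) as [Hrs Hle].
  { intros; apply rect_inv_pow_le; assumption. }
  split; [exact Hrs|]. rewrite Hv in Hle. exact Hle.
Qed.

Lemma rect_sum_ge k y : (3 <= k)%nat -> 1 <= y -> 2 * y ^ k <= lattice_sum (rect_inv_pow k y).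
Proof.
  intros Hk Hy.
  assert (Haxis := axis_le_lattice_sum _ (rect_inv_pow_nonneg k y Hy)
                     (proj1 (rect_inv_pow_summable_le k y Hk Hy))).
  unfold rect_inv_pow at 1 2 in Haxis. unfold rect_form in Haxis. simpl IZR in Haxis.
  replace (/ y * (-1 + 0 * 0) ^ 2 + y * 0 ^ 2) with (/ y) in Haxis by ring.
  replace (/ y * (1 + 0 * 0) ^ 2 + y * 0 ^ 2) with (/ y) in Haxis by ring.
  rewrite pow_inv, Rinv_inv in Haxis. lra.
Qed.

Lemma energy_rect y A : 1 <= y ->
  E_f V 0 y A =
  / A ^ 6 * lattice_sum (rect_inv_pow 6 y) - 2 * / A ^ 3 * lattice_sum (rect_inv_pow 3 y).
Proof.
  intros Hy. unfold E_f.
  replace (fun m n => V (A * (/ y * (IZR m + 0 * IZR n) ^ 2 + y * IZR n ^ 2)))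
    with (fun m n => / A ^ 6 * rect_inv_pow 6 y m n + (- 2 * / A ^ 3) * rect_inv_pow 3 y m n).
  2:{ do 2 (apply functional_extensionality; intro).
      unfold V, rect_inv_pow, rect_form. rewrite !Rpow_mult_distr, !Rinv_mult. ring. }
  rewrite lattice_sum_lin by (apply rect_inv_pow_summable_le; auto). ring.
Qed.

Lemma energy_rect_bounds y A : 1 <= y -> 0 < A ->
  2 * y ^ 6 / A ^ 6 - 2 * zeta6 * y ^ 3 / A ^ 3 <= E_f V 0 y A <=
  zeta12 * y ^ 6 / A ^ 6 - 4 * y ^ 3 / A ^ 3.
Proof.
  intros Hy HA. rewrite energy_rect by exact Hy.
  assert (HA6 : 0 < / A ^ 6) by (apply Rinv_0_lt_compat, pow_lt, HA).
  assert (HA3 : 0 < / A ^ 3) by (apply Rinv_0_lt_compat, pow_lt, HA).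
  destruct (rect_inv_pow_summable_le 6 y) as [_ U6]; auto.
  destruct (rect_inv_pow_summable_le 3 y) as [_ U3]; auto.
  assert (L6 := rect_sum_ge 6 y ltac:(auto) Hy).
  assert (L3 := rect_sum_ge 3 y ltac:(auto) Hy).
  apply (Rmult_le_compat_l (/ A ^ 6)) in U6, L6; try lra.
  apply (Rmult_le_compat_l (/ A ^ 3)) in U3, L3; try lra.
  unfold Rdiv, zeta6, zeta12. split; lra.
Qed.

Lemma zeta6_ge_2 : 2 <= zeta6.
Proof. apply zeta_Z2_even_ge_2; lia. Qed.

Lemma zeta12_ge_2 : 2 <= zeta12.
Proof. apply zeta_Z2_even_ge_2; lia. Qed.

Lemma Rpower_pow3_cube_root y : 0 < y -> Rpower (y ^ 3) (1 / 3) = y.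
Proof.
  intros Hy. rewrite <- (Rpower_pow 3 y Hy), Rpower_mult.
  replace (INR 3 * (1 / 3)) with 1 by (simpl; field). apply Rpower_1, Hy.
Qed.

Lemma cube_root_pow3 A : 0 < A -> Rpower A (1 / 3) ^ 3 = A.
Proof.
  intros HA. rewrite <- Rpower_pow by apply exp_pos.
  rewrite Rpower_mult. replace (1 / 3 * INR 3) with 1 by (simpl; field). apply Rpower_1, HA.
Qed.

(* [Rpower X _] is [1] for [X <= 0], whence the hypothesis [1 <= y]. *)
Lemma cube_root_le X y : 1 <= y -> X <= y ^ 3 -> Rpower X (1 / 3) <= y.
Proof.
  intros Hy HX. destruct (Rle_lt_dec X 0) as [HX0|HX0].
  - unfold Rpower, ln. destruct (Rlt_dec 0 X); [exfalso; lra|]. rewrite Rmult_0_r, exp_0. exact Hy.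
  - rewrite <- (Rpower_pow3_cube_root y) by lra. apply Rle_Rpower_l; lra.
Qed.

Lemma le_cube_root X y : 0 < y -> y ^ 3 <= X -> y <= Rpower X (1 / 3).
Proof.
  intros Hy HX. rewrite <- (Rpower_pow3_cube_root y) at 1 by exact Hy.
  apply Rle_Rpower_l; [lra|]. split; [apply pow_lt, Hy | exact HX].
Qed.

Lemma quadratic_le0_between b c X : 2 * X ^ 2 - 2 * b * X + c <= 0 ->
  (2 * b - sqrt (4 * b ^ 2 - 8 * c)) / 4 <= X <= (2 * b + sqrt (4 * b ^ 2 - 8 * c)) / 4.
Proof.
  intros Hq.
  assert (Hsq : Rsqr (4 * X - 2 * b) <= 4 * b ^ 2 - 8 * c) by (unfold Rsqr; nra).
  apply sqrt_le_1_alt in Hsq. rewrite sqrt_Rsqr_abs in Hsq.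
  generalize (Rle_abs (4 * X - 2 * b)) (Rle_abs (- (4 * X - 2 * b))).
  rewrite Rabs_Ropp. lra.
Qed.

Lemma minimizer_quadratic A y : 1 < A -> is_minimizer A y ->
  2 * (y ^ 3) ^ 2 - 2 * (zeta6 * A ^ 3) * y ^ 3 + (4 * A ^ 4 - zeta12 * A ^ 2) <= 0.
Proof.
  intros HA [Hy Hmin].
  set (ys := Rpower A (1 / 3)).
  assert (Hys3 : ys ^ 3 = A) by (apply cube_root_pow3; lra).
  assert (Hys : 1 <= ys).
  { rewrite <- (Rpower_O A) by lra. apply Rle_Rpower; lra. }
  assert (Hle := Hmin ys Hys).
  destruct (energy_rect_bounds y A Hy ltac:(lra)) as [Hlow _].
  destruct (energy_rect_bounds ys A Hys ltac:(lra)) as [_ Hup].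
  replace (ys ^ 6) with ((ys ^ 3) ^ 2) in Hup by ring. rewrite Hys3 in Hup.
  assert (Hineq : 2 * y ^ 6 / A ^ 6 - 2 * zeta6 * y ^ 3 / A ^ 3 <=
                  zeta12 * A ^ 2 / A ^ 6 - 4 * A / A ^ 3) by lra.
  apply (Rmult_le_compat_l (A ^ 6)) in Hineq; [|apply pow_le; lra].
  replace (A ^ 6 * (2 * y ^ 6 / A ^ 6 - 2 * zeta6 * y ^ 3 / A ^ 3))
    with (2 * (y ^ 3) ^ 2 - 2 * (zeta6 * A ^ 3) * y ^ 3) in Hineq by (field; lra).
  replace (A ^ 6 * (zeta12 * A ^ 2 / A ^ 6 - 4 * A / A ^ 3))
    with (zeta12 * A ^ 2 - 4 * A ^ 4) in Hineq by (field; lra).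
  lra.
Qed.

Lemma minimizer_cube_ge A y W : 1 < A -> 0 <= W -> zeta6 * W + zeta12 < A ->
  is_minimizer A y -> W <= y ^ 3.
Proof.
  intros HA HW HAW Hm. assert (Hq := minimizer_quadratic A y HA Hm).
  assert (Z6 := zeta6_ge_2). assert (Z12 := zeta12_ge_2).
  assert (HA3 : 0 < A ^ 3) by (apply pow_lt; lra).
  assert (H1 : 2 * zeta6 * A ^ 3 * W <= 4 * A ^ 4 - zeta12 * A ^ 2).
  { replace (4 * A ^ 4 - zeta12 * A ^ 2) with (A ^ 2 * (4 * A ^ 2 - zeta12)) by ring.
    replace (2 * zeta6 * A ^ 3 * W) with (A ^ 2 * (2 * zeta6 * A * W)) by ring.
    apply Rmult_le_compat_l; nra. }
  assert (H2 : 0 <= (y ^ 3) ^ 2) by apply pow2_ge_0.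
  apply (Rmult_le_reg_l (2 * zeta6 * A ^ 3)); [nra | lra].
Qed.

Lemma minimizer_cube_le A y : 1 < A -> is_minimizer A y ->
  y ^ 3 <= (zeta6 + zeta12 / 2) * A ^ 3.
Proof.
  intros HA Hm. assert (Hq := minimizer_quadratic A y HA Hm).
  destruct Hm as [Hy _].
  assert (Z6 := zeta6_ge_2). assert (Z12 := zeta12_ge_2).
  assert (HX : 1 <= y ^ 3) by (apply pow_R1_Rle, Hy).
  assert (HA2 : 1 <= A ^ 2) by (apply pow_R1_Rle; lra).
  assert (HA23 : A ^ 2 <= A ^ 3) by (apply Rle_pow; lra || lia).
  set (X := y ^ 3) in *.
  assert (HA4 : 0 <= A ^ 4) by (apply pow_le; lra).
  assert (Hz : zeta12 * A ^ 2 * 1 <= zeta12 * A ^ 2 * X) by (apply Rmult_le_compat_l; nra).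
  assert (H1 : 2 * X * X <= 2 * zeta6 * A ^ 3 * X + zeta12 * A ^ 2 * X) by nra.
  assert (H2 : 2 * X <= 2 * zeta6 * A ^ 3 + zeta12 * A ^ 2)
    by (apply (Rmult_le_reg_r X); nra).
  nra.
Qed.

Theorem proposition5p1 :
  exists A3 : R, 0 < A3 /\
    (forall A yA : R, A3 < A -> is_minimizer A yA ->
       Rpower (X1 A) (1/3) <= yA <= Rpower (X2 A) (1/3)) /\
    (forall M : R, exists A0 : R, forall A yA : R,
       A0 < A -> A3 < A -> is_minimizer A yA -> M <= yA) /\
    (exists C : R, 0 < C /\
       forall A yA : R, A3 < A -> is_minimizer A yA -> yA <= C * A).
Proof.
  exists 1. split; [lra|]. split; [|split].
  - intros A y HA Hm.
    destruct (quadratic_le0_between _ _ _ (minimizer_quadratic A y HA Hm)) as [Hlo Hhi].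
    replace (4 * (zeta6 * A ^ 3) ^ 2 - 8 * (4 * A ^ 4 - zeta12 * A ^ 2))
      with (4 * zeta6 ^ 2 * A ^ 6 - 32 * A ^ 4 + 8 * zeta12 * A ^ 2) in Hlo, Hhi by ring.
    destruct Hm as [Hy _]. unfold X1, X2.
    replace (2 * zeta6 * A ^ 3) with (2 * (zeta6 * A ^ 3)) by ring.
    split; [apply cube_root_le | apply le_cube_root]; lra.
  - intros M. set (M' := Rmax M 1). exists (zeta6 * M' ^ 3 + zeta12).
    intros A y HA0 HA Hm.
    assert (HM' : 1 <= M') by apply Rmax_r.
    assert (HW := minimizer_cube_ge A y (M' ^ 3) HA (pow_le M' 3 ltac:(lra)) HA0 Hm).
    apply cube_root_le in HW; [|exact (proj1 Hm)].
    rewrite Rpower_pow3_cube_root in HW by lra.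
    generalize (Rmax_l M 1). fold M'. lra.
  - set (C := zeta6 + zeta12 / 2 + 1).
    assert (HC : 2 <= C) by (generalize zeta6_ge_2 zeta12_ge_2; unfold C; lra).
    exists C. split; [lra|]. intros A y HA Hm.
    rewrite <- (Rpower_pow3_cube_root (C * A)) by nra.
    apply le_cube_root; [generalize (proj1 Hm); lra|].
    assert (HA3 : 0 < A ^ 3) by (apply pow_lt; lra).
    assert (HCC : C <= C ^ 3) by (simpl; nra).
    generalize (minimizer_cube_le A y HA Hm). rewrite Rpow_mult_distr. unfold C in *. nra.
Qed.
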